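(* Let $S$ be an $E$-demigroup, and let $E,E'\subseteq E(S)$ be right pre-reduced sets together with a bijection $E\to E'$, $e\mapsto e'$, such that $e\sim_r e'$ for all $e\in E$. Suppose $d(S)\subseteq E'$ and $d(e)=d(e')$ for all $e\in E$. Then $S$ is an $E'$-demigroup with respect to the same operation $d$, and the map $(e,s)\mapsto(e',e's)$ is an isomorphism of constellations from $C^d_E(S)$ onto $C^d_{E'}(S)$ (with inverse $(e',s)\mapsto(e,es)$). In particular, if $S$ is a left $E$-monoid then $C_E(S)\cong C_{E'}(S)$, and if $S$ is a left $E$-monoid with zero then $C^0_E(S)\cong C^0_{E'}(S)$.
   Context: For a semigroup $S$, $E(S)$ is its set of idempotents. For $e,f\in E(S)$, $e\le_r f$ iff $e=ef$, and $e\sim_r f$ iff $e\le_r f$ and $f\le_r e$. A subset $E\subseteq E(S)$ is right pre-reduced if $e=ef$ and $f=fe$ imply $e=f$ for all $e,f\in E$. A demigroup is a semigroup $S$ with a unary operation $d$ such that for all $x,y\in S$: $d(x)\in E(S)$, $d(x)x=x$ and $d(xy)=d(xd(y))$; $d(S)=\{d(s)\mid s\in S\}$. For $E\subseteq E(S)$, a demigroup $S$ is an $E$-demigroup if $d(s)\in E$ for all $s\in S$ and $ed(e)=e$ for all $e\in E$. $C_E(S)=\{(e,s)\in E\times S\mid es=s\}$ with partial product $(e,s)\circ(f,t)=(e,st)$ defined exactly when $sf=s$, and $D((e,s))=(e,e)$; $C^d_E(S)=\{(e,s)\in C_E(S)\mid d(e)=d(s)\}$ with the restricted operations (these are constellations).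 Let $S$ be a monoid with $1\in E\subseteq E(S)$. $S$ regarded as an $E$-demigroup via $d(s)=1$ for all $s$ is a left $E$-monoid; then $C^d_E(S)=C_E(S)$. If $S$ has a zero $0$, is integral ($st=0$ implies $s=0$ or $t=0$) and $0\in E$, then $S$ regarded as an $E$-demigroup via $d(0)=0$ and $d(s)=1$ for $s\neq0$ is a left $E$-monoid with zero; then $C^d_E(S)=C^0_E(S):=\{(e,s)\in C_E(S)\mid s=0\Rightarrow e=0\}$. An isomorphism of constellations $\rho:P\to Q$ is a bijection such that $\rho(D(s))=D(\rho(s))$ for all $s$, and $s\circ t$ exists iff $\rho(s)\circ\rho(t)$ exists, in which case $\rho(s\circ t)=\rho(s)\circ\rho(t)$. *)

Set Implicit Arguments.

Section Defs.
Variables (S : Type) (mul : S -> S -> S).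

Definition associative := forall x y z, mul x (mul y z) = mul (mul x y) z.

Definition idempotent (e : S) := mul e e = e.

Definition le_r (e f : S) := e = mul e f.
Definition sim_r (e f : S) := le_r e f /\ le_r f e.

Definition right_pre_reduced (E : S -> Prop) :=
  (forall e, E e -> idempotent e) /\
  (forall e f, E e -> E f -> e = mul e f -> f = mul f e -> e = f).

(* (S, d) is a demigroup (S is assumed to be a semigroup separately) *)
Definition is_demigroup (d : S -> S) :=
  (forall x, idempotent (d x)) /\
  (forall x, mul (d x) x = x) /\
  (forall x y, d (mul x y) = d (mul x (d y))).

Definition is_E_demigroup (d : S -> S) (E : S -> Prop) :=
  (forall e, E e -> idempotent e) /\
  is_demigroup d /\
  (forall s, E (d s)) /\
  (forall e, E e -> mul e (d e) = e).

Definition C_E (E : S -> Prop) (p : S * S) : Prop :=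
  E (fst p) /\ mul (fst p) (snd p) = snd p.
Definition Cd_E (d : S -> S) (E : S -> Prop) (p : S * S) : Prop :=
  C_E E p /\ d (fst p) = d (snd p).
Definition C0_E (z : S) (E : S -> Prop) (p : S * S) : Prop :=
  C_E E p /\ (snd p = z -> fst p = z).

Definition cdefined (p q : S * S) : Prop := mul (snd p) (fst q) = snd p.
Definition cprod (p q : S * S) : S * S := (fst p, mul (snd p) (snd q)).
Definition cD (p : S * S) : S * S := (fst p, fst p).

Definition constellation_iso (P Q : S * S -> Prop) (rho : S * S -> S * S) :=
  (forall p, P p -> Q (rho p)) /\
  (forall p q, P p -> P q -> rho p = rho q -> p = q) /\
  (forall q, Q q -> exists p, P p /\ rho p = q) /\
  (forall p, P p -> rho (cD p) = cD (rho p)) /\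
  (forall p q, P p -> P q ->
     (cdefined p q <-> cdefined (rho p) (rho q))) /\
  (forall p q, P p -> P q -> cdefined p q ->
     rho (cprod p q) = cprod (rho p) (rho q)).

Definition bijection_on (E E' : S -> Prop) (f : S -> S) :=
  (forall e, E e -> E' (f e)) /\
  (forall e1 e2, E e1 -> E e2 -> f e1 = f e2 -> e1 = e2) /\
  (forall e', E' e' -> exists e, E e /\ f e = e').

Definition prime_map (f : S -> S) (p : S * S) : S * S :=
  (f (fst p), mul (f (fst p)) (snd p)).

End Defs.

From Stdlib Require Import Setoid.

(* The whole argument rests on two absorption facts: for any
   x, x e = x iff x (f e) = x; and e (f e) s = e s, (f e) e s = (f e) s.
   From these, (e,s) |-> (f e, (f e) s) maps C_E(S) into C_E'(S), is inverted
   by (f e, s) |-> (e, e s), and commutes with D, with definedness of the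
   partial product and with the product itself.  Hence it is an isomorphism
   between any two sub-constellations P of C_E(S) and Q of C_E'(S) that the
   map and its inverse send into each other (lemma prime_map_iso).

   The theorem then only has to identify the matching carriers: C^d_E with
   C^d_E' for a demigroup with d(S) in E' and d e = d (f e) (which also makes
   S an E'-demigroup), C_E with C_E' for a left E-monoid, and C^0_E with
   C^0_E' for an integral left E-monoid with zero, where f fixes 0. *)

Section PrimeMap.
Variables (S : Type) (mul : S -> S -> S).
Local Infix "⋅" := mul (at level 40, left associativity).
Hypothesis assoc : associative mul.

(* An element is right-fixed by g exactly when it is right-fixed by any g'
   that is r-equivalent to g; this governs definedness of products. *)
Lemma fixed_iff_sim {g g' : S} (x : S) :
  sim_r mul g g' -> (x ⋅ g = x <-> x ⋅ g' = x).
Proof.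
  intros [Hgg' Hg'g]; unfold le_r in *; split; intros Hx.
  - rewrite <- Hx at 1. rewrite <- assoc, <- Hgg'. exact Hx.
  - rewrite <- Hx at 1. rewrite <- assoc, <- Hg'g. exact Hx.
Qed.

Lemma sim_r_sym {g g' : S} : sim_r mul g g' -> sim_r mul g' g.
Proof. intros [H1 H2]. split; assumption. Qed.

Lemma sim_absorb {e e' s : S} : sim_r mul e e' -> e ⋅ (e' ⋅ s) = e ⋅ s.
Proof. intros [He _]; unfold le_r in He. rewrite assoc, <- He. reflexivity. Qed.

Variables (E E' : S -> Prop) (f : S -> S).
Hypothesis idemE : forall e, E e -> idempotent mul e.
Hypothesis idemE' : forall e, E' e -> idempotent mul e.
Hypothesis bij : bijection_on E E' f.
Hypothesis sim : forall e, E e -> sim_r mul e (f e).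

Lemma prime_map_C (p : S * S) : C_E mul E p -> C_E mul E' (prime_map mul f p).
Proof.
  destruct p as [e s]; intros [Ee _]; unfold prime_map, C_E; simpl.
  assert (Ee' : E' (f e)) by (apply bij; exact Ee).
  split; [exact Ee'|].
  rewrite assoc, (idemE' _ Ee'). reflexivity.
Qed.

Lemma unprime_C (e s : S) : E e -> C_E mul E (e, e ⋅ s).
Proof.
  intros Ee; unfold C_E; simpl. split; [exact Ee|].
  rewrite assoc, (idemE _ Ee). reflexivity.
Qed.

Lemma prime_unprime (e s : S) :
  E e -> f e ⋅ s = s -> prime_map mul f (e, e ⋅ s) = (f e, s).
Proof.
  intros Ee Hs; unfold prime_map; simpl.
  rewrite (sim_absorb (sim_r_sym (sim _ Ee))), Hs. reflexivity.
Qed.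

Lemma unprime_prime {e s : S} : E e -> e ⋅ s = s -> e ⋅ (f e ⋅ s) = s.
Proof. intros Ee Hs. rewrite (sim_absorb (sim _ Ee)). exact Hs. Qed.

(* Injectivity on C_E(S): equal images force equal first coordinates, and
   then s = e (f e) s recovers the second. *)
Lemma prime_map_injective (p q : S * S) :
  C_E mul E p -> C_E mul E q -> prime_map mul f p = prime_map mul f q -> p = q.
Proof.
  destruct p as [e s], q as [g t]; intros [Ee Hs] [Eg Ht]; simpl in *.
  unfold prime_map; simpl; intros Heq; injection Heq as Hf Hst.
  assert (Heg : e = g) by (apply bij; assumption). subst g.
  rewrite <- (unprime_prime Ee Hs), <- (unprime_prime Ee Ht), Hst. reflexivity.
Qed.

(* D(e,s) = (e,e) goes to (f e, (f e) e) = (f e, f e) = D of the image. *)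
Lemma prime_map_D (p : S * S) :
  C_E mul E p -> prime_map mul f (cD p) = cD (prime_map mul f p).
Proof.
  destruct p as [e s]; intros [Ee _]; unfold prime_map, cD; simpl.
  destruct (sim e Ee) as [_ Hfe]; unfold le_r in Hfe. rewrite <- Hfe. reflexivity.
Qed.

Lemma prime_map_defined (p q : S * S) :
  C_E mul E p -> C_E mul E q ->
  (cdefined mul p q <-> cdefined mul (prime_map mul f p) (prime_map mul f q)).
Proof.
  destruct p as [e s], q as [g t]; intros [Ee Hs] [Eg _]; simpl in *.
  unfold cdefined, prime_map; simpl.
  rewrite (fixed_iff_sim s (sim _ Eg)); split; intros Hd.
  - rewrite <- assoc, Hd. reflexivity.
  - rewrite <- (unprime_prime Ee Hs), <- assoc, Hd. reflexivity.
Qed.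

(* When s g = s, also s (f g) = s, so (f e) s (f g) t = (f e) s t. *)
Lemma prime_map_product (p q : S * S) :
  C_E mul E p -> C_E mul E q -> cdefined mul p q ->
  prime_map mul f (cprod mul p q) = cprod mul (prime_map mul f p) (prime_map mul f q).
Proof.
  destruct p as [e s], q as [g t]; intros _ [Eg _]; simpl in *.
  unfold cdefined, cprod, prime_map; simpl; intros Hd.
  apply (fixed_iff_sim s (sim _ Eg)) in Hd.
  rewrite <- !assoc, (assoc s), Hd. reflexivity.
Qed.

Lemma prime_map_iso (P Q : S * S -> Prop) :
  (forall p, P p -> C_E mul E p) ->
  (forall q, Q q -> C_E mul E' q) ->
  (forall p, P p -> Q (prime_map mul f p)) ->
  (forall e s, E e -> Q (f e, s) -> P (e, e ⋅ s)) ->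
  constellation_iso mul P Q (prime_map mul f).
Proof.
  intros PC QC PQ QP.
  split; [exact PQ|]. split; [|split; [|split; [|split]]].
  - intros p q Hp Hq. apply prime_map_injective; auto.
  - intros [e' s] Hq.
    destruct (QC _ Hq) as [Ee' Hs]; simpl in *.
    destruct (proj2 (proj2 bij) e' Ee') as [e [Ee <-]].
    exists (e, e ⋅ s). split; [apply QP; assumption|].
    apply prime_unprime; assumption.
  - intros p Hp. apply prime_map_D; auto.
  - intros p q Hp Hq. apply prime_map_defined; auto.
  - intros p q Hp Hq. apply prime_map_product; auto.
Qed.

End PrimeMap.

Section Demigroup.
Variables (S : Type) (mul : S -> S -> S) (d : S -> S).
Local Infix "⋅" := mul (at level 40, left associativity).
Hypothesis assoc : associative mul.
Variables (E E' : S -> Prop) (f : S -> S).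
Hypothesis HdE : is_E_demigroup mul d E.
Hypothesis idemE' : forall e, E' e -> idempotent mul e.
Hypothesis bij : bijection_on E E' f.
Hypothesis sim : forall e, E e -> sim_r mul e (f e).
Hypothesis dE' : forall s, E' (d s).
Hypothesis d_prime : forall e, E e -> d e = d (f e).

(* f e still absorbs d e on the right: f e = (f e) e = (f e) e (d e). *)
Lemma prime_d_absorb {e : S} : E e -> f e ⋅ d e = f e.
Proof.
  intros Ee. destruct HdE as [_ [_ [_ HedE]]].
  destruct (sim e Ee) as [_ Hfe]; unfold le_r in Hfe.
  rewrite Hfe at 1. rewrite <- assoc, (HedE e Ee). symmetry; exact Hfe.
Qed.

Lemma E'_demigroup : is_E_demigroup mul d E'.
Proof.
  destruct HdE as [_ [Hd _]].
  split; [exact idemE'|]. split; [exact Hd|]. split; [exact dE'|].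
  intros e' Ee'. destruct (proj2 (proj2 bij) e' Ee') as [e [Ee <-]].
  rewrite <- (d_prime _ Ee). exact (prime_d_absorb Ee).
Qed.

Lemma prime_map_Cd (p : S * S) : Cd_E mul d E p -> Cd_E mul d E' (prime_map mul f p).
Proof.
  intros [HC Hd]. split; [eapply prime_map_C; eassumption|].
  destruct p as [e s], HC as [Ee _]; unfold prime_map in *; simpl in *.
  destruct HdE as [_ [[_ [_ Hdxy]] _]].
  rewrite Hdxy, <- Hd, (prime_d_absorb Ee). reflexivity.
Qed.

Lemma unprime_Cd (e s : S) : E e -> Cd_E mul d E' (f e, s) -> Cd_E mul d E (e, e ⋅ s).
Proof.
  intros Ee [HC Hd]; simpl in *.
  destruct HdE as [idemE [[_ [_ Hdxy]] [_ HedE]]].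
  split; [apply (unprime_C _ _ assoc E idemE); exact Ee|]; simpl.
  rewrite Hdxy, <- Hd, <- (d_prime _ Ee), (HedE e Ee). reflexivity.
Qed.

End Demigroup.

Section Zero.
Variables (S : Type) (mul : S -> S -> S) (zero : S).
Local Infix "⋅" := mul (at level 40, left associativity).
Hypothesis assoc : associative mul.
Hypothesis mul_zero : forall x, x ⋅ zero = zero.
Hypothesis integral : forall s t, s ⋅ t = zero -> s = zero \/ t = zero.
Variables (E E' : S -> Prop) (f : S -> S).
Hypothesis idemE : forall e, E e -> idempotent mul e.
Hypothesis idemE' : forall e, E' e -> idempotent mul e.
Hypothesis bij : bijection_on E E' f.
Hypothesis sim : forall e, E e -> sim_r mul e (f e).
Hypothesis E_zero : E zero.

Lemma prime_zero : f zero = zero.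
Proof.
  destruct (sim zero E_zero) as [_ Hf]; unfold le_r in Hf.
  rewrite Hf, mul_zero. reflexivity.
Qed.

(* In an integral monoid with zero, (f e) s = 0 forces s = 0 and hence
   e = 0, so the twisting map sends C^0_E(S) into C^0_E'(S) ... *)
Lemma prime_map_C0 (p : S * S) :
  C0_E mul zero E p -> C0_E mul zero E' (prime_map mul f p).
Proof.
  intros [HC Hz]. split; [eapply prime_map_C; eassumption|].
  destruct p as [e s]; unfold prime_map; simpl in *; intros Hfs.
  destruct (integral _ _ Hfs) as [Hfe | Hs]; [exact Hfe|].
  rewrite (Hz Hs). exact prime_zero.
Qed.

(* ... and its inverse, using injectivity of f at 0, sends C^0_E'(S) back. *)
Lemma unprime_C0 (e s : S) :
  E e -> C0_E mul zero E' (f e, s) -> C0_E mul zero E (e, e ⋅ s).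
Proof.
  intros Ee [_ Hz]. split; [apply (unprime_C _ _ assoc E idemE); exact Ee|]; simpl.
  intros Hes. destruct (integral _ _ Hes) as [He | Hs]; [exact He|].
  apply (proj1 (proj2 bij)); [exact Ee | exact E_zero|].
  rewrite prime_zero. exact (Hz Hs).
Qed.

End Zero.

Theorem proposition3p4 :
  (* main statement *)
  (forall (S : Type) (mul : S -> S -> S) (d : S -> S)
          (E E' : S -> Prop) (f : S -> S),
     associative mul ->
     is_E_demigroup mul d E ->
     right_pre_reduced mul E -> right_pre_reduced mul E' ->
     bijection_on E E' f ->
     (forall e, E e -> sim_r mul e (f e)) ->
     (forall s, E' (d s)) ->
     (forall e, E e -> d e = d (f e)) ->
     is_E_demigroup mul d E' /\
     constellation_iso mul (Cd_E mul d E) (Cd_E mul d E') (prime_map mul f) /\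
     (* the inverse is (e', s) |-> (e, e s) *)
     (forall e s, E e -> Cd_E mul d E' (f e, s) ->
        Cd_E mul d E (e, mul e s) /\ prime_map mul f (e, mul e s) = (f e, s))) /\
  (* left E-monoid: d(s) = 1 for all s *)
  (forall (S : Type) (mul : S -> S -> S) (one : S)
          (E E' : S -> Prop) (f : S -> S),
     associative mul ->
     (forall x, mul one x = x) -> (forall x, mul x one = x) ->
     E one ->
     right_pre_reduced mul E -> right_pre_reduced mul E' ->
     bijection_on E E' f ->
     (forall e, E e -> sim_r mul e (f e)) ->
     constellation_iso mul (C_E mul E) (C_E mul E') (prime_map mul f)) /\
  (* left E-monoid with zero: integral, 0 ∈ E, d(0) = 0, d(s) = 1 otherwise *)
  (forall (S : Type) (mul : S -> S -> S) (one zero : S)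
          (E E' : S -> Prop) (f : S -> S),
     associative mul ->
     (forall x, mul one x = x) -> (forall x, mul x one = x) ->
     (forall x, mul zero x = zero) -> (forall x, mul x zero = zero) ->
     (forall s t, mul s t = zero -> s = zero \/ t = zero) ->
     E one -> E zero ->
     right_pre_reduced mul E -> right_pre_reduced mul E' ->
     bijection_on E E' f ->
     (forall e, E e -> sim_r mul e (f e)) ->
     constellation_iso mul (C0_E mul zero E) (C0_E mul zero E') (prime_map mul f)).
Proof.
  split; [|split].
  - intros S mul d E E' f assoc HdE _ [idemE' _] bij sim dE' d_prime.
    split; [|split].
    + eapply E'_demigroup; eassumption.
    + apply (prime_map_iso _ _ assoc _ _ _ bij sim).
      * intros p Hp; exact (proj1 Hp).
      * intros q Hq; exact (proj1 Hq).
      * eapply prime_map_Cd; eassumption.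
      * eapply unprime_Cd; eassumption.
    + intros e s Ee Hq. split; [eapply unprime_Cd; eassumption|].
      apply (prime_unprime _ _ assoc _ _ sim); [exact Ee | exact (proj2 (proj1 Hq))].
  - intros S mul one E E' f assoc _ _ _ [idemE _] [idemE' _] bij sim.
    apply (prime_map_iso _ _ assoc _ _ _ bij sim); auto.
    + eapply prime_map_C; eassumption.
    + intros e s Ee _. apply unprime_C; assumption.
  - intros S mul one zero E E' f assoc _ _ _ mul_zero integral _ E_zero
      [idemE _] [idemE' _] bij sim.
    apply (prime_map_iso _ _ assoc _ _ _ bij sim).
    + intros p Hp; exact (proj1 Hp).
    + intros q Hq; exact (proj1 Hq).
    + eapply prime_map_C0; eassumption.
    + eapply unprime_C0; eassumption.
Qed.
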